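(* Let $n,k\in\mathbb{N}$. If a finite set $X\subseteq\mathbb{N}$ is $\omega^{n+6k}$-large and exp-sparse, then $X$ admits an $(\omega^n,\omega^k)$-grouping, i.e. for every colouring $P:[X]^2\to 2$ there exists an $(\omega^n,\omega^k)$-grouping for $P$.
   Context: Ordinals below $\omega^\omega$ are in Cantor normal form; $\omega^j\cdot m$ = sum of $m$ copies of $\omega^j$. For $m\in\mathbb{N}$: $0[m]=0$, $(\beta+1)[m]=\beta$, $(\beta+\omega^{n})[m]=\beta+\omega^{n-1}\cdot m$ for $n\ge1$. A finite $X=\{x_0<\dots<x_{\ell-1}\}\subseteq\mathbb{N}$ is $\alpha$-large if $\alpha[x_0]\cdots[x_{\ell-1}]=0$. A set $X$ with $\min X\ge3$ is exp-sparse if $x<y$ in $X$ implies $4^x<y$. For $\alpha,\beta<\omega^\omega$, $X\subseteq\mathbb{N}$ and $P:[X]^2\to2$, a finite sequence $\langle F_i\subseteq X:i<\ell\rangle$ of finite sets is an $(\alpha,\beta)$-grouping for $P$ if: (1) $\max F_i<\min F_j$ for all $i<j<\ell$; (2) each $F_i$ is $\alpha$-large; (3) $\{\max F_i:i<\ell\}$ is $\beta$-large; (4) for all $i<j<\ell$, all $x,x'\in F_i$ and $y,y'\in F_j$, $P(x,y)=P(x',y')$. *)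

From mathcomp Require Import all_boot.
Set Implicit Arguments. Unset Strict Implicit. Unset Printing Implicit Defensive.

(* Ordinals below omega^omega in Cantor normal form:
   the list [:: e1; e2; ...; er] with e1 >= e2 >= ... >= er denotes
   omega^e1 + omega^e2 + ... + omega^er; [::] denotes 0. *)
Definition cnf := seq nat.

Definition omega_pow (n : nat) : cnf := [:: n].

(* Fundamental sequence: 0[m] = 0, (b+1)[m] = b,
   (b + omega^(n+1))[m] = b + omega^n * m  (m copies of omega^n). *)
Definition fund (a : cnf) (m : nat) : cnf :=
  match rev a with
  | [::] => [::]
  | 0 :: r => rev r
  | n.+1 :: r => rev r ++ nseq m n
  end.

(* Finite subsets of nat are represented by their strictly increasing
   enumeration x_0 < ... < x_{l-1}. X is a-large iff a[x_0]...[x_{l-1}] = 0. *)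
Definition large (a : cnf) (X : seq nat) : bool := foldl fund a X == [::].

Definition exp_sparse (X : seq nat) : Prop :=
  (forall x, x \in X -> 3 <= x) /\
  (forall x y, x \in X -> y \in X -> x < y -> 4 ^ x < y).

(* (a,b)-grouping for P : [X]^2 -> 2 (given as a function on pairs of naturals;
   only its values on pairs x < y of elements of X matter).
   Fs = <F_0, ..., F_{l-1}>, each F_i a finite subset of X given by its
   increasing enumeration, so max F_i = last 0 F_i, min F_i = head 0 F_i. *)
Definition grouping (a b : cnf) (X : seq nat) (P : nat -> nat -> bool)
    (Fs : seq (seq nat)) : Prop :=
  (forall i, i < size Fs ->
     sorted ltn (nth [::] Fs i) /\ {subset nth [::] Fs i <= X}) /\
  (forall i j, i < j < size Fs ->
     last 0 (nth [::] Fs i) < head 0 (nth [::] Fs j)) /\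
  (forall i, i < size Fs -> large a (nth [::] Fs i)) /\
  large b [seq last 0 F | F <- Fs] /\
  (forall i j, i < j < size Fs ->
     forall x x' y y', x \in nth [::] Fs i -> x' \in nth [::] Fs i ->
       y \in nth [::] Fs j -> y' \in nth [::] Fs j -> P x y = P x' y').

(* Largeness of omega^m * c is upward closed, and on exp-sparse sets it obeys a pigeonhole
   principle: a c-colouring of an omega^j * N-large set has an omega^j * (N / 2c)-large
   colour class.

   The theorem is proved in a stronger form by induction on k: an exp-sparse
   omega^(n+3k+1)-large set T has a grouping whose groups are moreover monochromatic for an
   auxiliary colouring chi with few colours compared to min T.  For the step, T = t :: _
   contains two omega^(n+3k+3)-large blocks.  In the second one we take a class Z on which
   P x is constant for every x of T below Z, with first element y0; in the first one an
   omega^n-large group F0 monochromatic for chi and for P _ y0.  Then Z splits into max F0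
   blocks, processed from right to left: each block is shrunk so that P x is constant on it
   for every x below it, and the induction hypothesis is applied to it with chi refined by
   the colours P x r of representatives r of the groups already built to its right. *)

From mathcomp Require Import all_boot zify.
Set Implicit Arguments. Unset Strict Implicit. Unset Printing Implicit Defensive.

(** * Sequences and arithmetic *)

Lemma mem_head_nonempty (T : eqType) (x0 : T) s : s != [::] -> head x0 s \in s.
Proof. by case: s => // x s _; apply: mem_head. Qed.

Lemma mem_last_nonempty (T : eqType) (x0 : T) s : s != [::] -> last x0 s \in s.
Proof. by case: s => // x s _; apply: (mem_last x). Qed.

Lemma leq_last x0 (s : seq nat) : pairwise ltn s -> {in s, forall x, x <= last x0 s}.
Proof.
case/lastP: s => // s l; rewrite pairwise_rcons last_rcons => /andP [/allP sl _] x.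
by rewrite mem_rcons inE => /predU1P [-> //|/sl/ltnW].
Qed.

Lemma pairwise_split_at (Y : seq nat) b : pairwise ltn Y ->
  exists Y1 Y2, [/\ Y = Y1 ++ Y2, all (geq b) Y1 & all (ltn b) Y2].
Proof.
elim: Y => [|y Y IH]; first by exists [::], [::].
rewrite pairwise_cons => /andP [yY /IH [Y1 [Y2 [EY le_b gt_b]]]]; subst Y.
have [yb|by_] := leqP y b; first by exists (y :: Y1), Y2; rewrite /= yb.
exists [::], (y :: Y1 ++ Y2); split => //=; rewrite by_ /=.
by apply/allP => z zY; apply: ltn_trans by_ (allP yY z zY).
Qed.

Lemma mem_flatten_subseq (T : eqType) (S : seq T) Ss : S \in Ss -> subseq S (flatten Ss).
Proof.
elim: Ss => //= S' Ss IH; rewrite inE => /predU1P [->|/IH sS]; first exact: prefix_subseq.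
exact: subseq_trans sS (suffix_subseq _ _).
Qed.

Lemma flatten_filter_subseq (T : eqType) (p : pred (seq T)) Ss :
  subseq (flatten (filter p Ss)) (flatten Ss).
Proof.
elim: Ss => //= S Ss IH; case: (p S) => /=; first by rewrite subseq_cat2l.
exact: subseq_trans IH (suffix_subseq _ _).
Qed.

Lemma pigeonhole_count (T : eqType) c (p : nat -> pred T) (s : seq T) : 0 < c ->
  (forall x, x \in s -> exists2 d, d < c & p d x) ->
  exists d, size s <= c * count (p d) s.
Proof.
elim: c s => [//|c IH] s _ cover.
have [c0|c_gt0] := posnP c.
  exists 0; subst c; rewrite mul1n.
  suff : all (p 0) s by rewrite all_count => /eqP ->.
  by apply/allP => x /cover [d]; rewrite ltnS leqn0 => /eqP ->.
have [|few] := leqP (size s) (c.+1 * count (p c) s); first by exists c.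
set s' := [seq x <- s | ~~ p c x].
have [d le_s'] : exists d, size s' <= c * count (p d) s'.
  apply: IH => // x; rewrite mem_filter => /andP [pcx /cover [d]].
  rewrite ltnS leq_eqVlt => /predU1P [-> pcx'|dc pdx]; last by exists d.
  by rewrite pcx' in pcx.
exists d.
have sizes : count (p c) s + size s' = size s by rewrite size_filter; exact: count_predC.
have : count (p d) s' <= count (p d) s.
  by rewrite count_filter; apply: sub_count => x /andP [].
nia.
Qed.

Lemma leq_div_double N c K : 0 < c -> N <= c * K -> N %/ (2 * c) <= K./2.
Proof.
move=> c_gt0 le; apply: leq_trans (leq_div2r _ le) _.
by rewrite (mulnC 2) divnMl // divn2.
Qed.

Lemma sq_lt_exp4 h : h * h < 4 ^ h.
Proof.
have lt := ltn_expl h (isT : 1 < 2).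
by rewrite -[4]/(2 * 2) expnMn; case: h lt => // h lt; apply: ltn_mul.
Qed.

Lemma mul_exp2_le_exp4 m : m * 2 ^ m <= 4 ^ m.
Proof.
by rewrite -[4]/(2 * 2) expnMn leq_mul2r (ltnW (ltn_expl _ (isT : 1 < 2))) orbT.
Qed.

Lemma two_le_exp4 t : 2 * t <= 4 ^ t.
Proof.
apply: leq_trans (mul_exp2_le_exp4 t); rewrite mulnC leq_mul2l.
by case: t => //= t; rewrite expnS leq_pmulr ?expn_gt0 ?orbT.
Qed.

Definition bits (f : nat -> bool) (L : seq nat) : nat := foldr (fun x b => f x + b.*2) 0 L.

Lemma bits_lt f L : bits f L < 2 ^ size L.
Proof. by elim: L => //= x L IH; rewrite expnS; case: (f x) => /=; lia. Qed.

Lemma bits_inj f g L : bits f L = bits g L -> {in L, f =1 g}.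
Proof.
elim: L => //= x L IH E y; rewrite inE => /predU1P [->|yL].
  by move: E; case: (f x); case: (g x) => //=; lia.
by apply: IH yL; move: E; case: (f x); case: (g x) => /=; lia.
Qed.

Lemma mixed_radix_lt C B a b : a < C -> b < B -> a + C * b < C * B.
Proof. nia. Qed.

Lemma mixed_radix_inj C a b x y : a < C -> b < C -> a + C * x = b + C * y -> a = b /\ x = y.
Proof.
move=> aC bC E; have C_gt0 : 0 < C := leq_ltn_trans (leq0n a) aC.
have ab : a = b.
  by have := congr1 (modn^~ C) E; rewrite /= !(mulnC C) !(addnC _ (_ * C)) !modnMDl !modn_small.
by split => //; move: E; rewrite ab => /addnI/eqP; rewrite eqn_pmul2l // => /eqP.
Qed.

(** * Largeness *)

Lemma large_cons a x S : large a (x :: S) = large (fund a x) S.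
Proof. by []. Qed.

Lemma large0 S : large [::] S.
Proof. by rewrite /large; elim: S. Qed.

Lemma fund_cat b a x : a != [::] -> fund (b ++ a) x = b ++ fund a x.
Proof.
rewrite /fund rev_cat; case/lastP: a => [//|a y _].
by rewrite rev_rcons; case: y => [|y]; rewrite /= rev_cat revK // catA.
Qed.

Lemma large_catr a S T : large a S -> large a (S ++ T).
Proof. by rewrite /large foldl_cat => /eqP ->; rewrite -/(large [::] T) large0. Qed.

Lemma large_cat_split b a S : large (b ++ a) S ->
  exists S1 S2, [/\ S = S1 ++ S2, large a S1 & large b S2].
Proof.
elim: S a => [|x S IH] a.
  by case: b => [|//]; case: a => [|//] _; exists [::], [::].
have [->|a0] := eqVneq a [::].
  by rewrite cats0 => L; exists [::], (x :: S); rewrite large0.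
rewrite large_cons fund_cat // => /IH [S1 [S2 [-> L1 L2]]].
by exists (x :: S1), S2.
Qed.

Lemma large_cat_suffix b a S T : large a S ->
  exists S0 S', S = S0 ++ S' /\ large (b ++ a) (S ++ T) = large b (S' ++ T).
Proof.
elim: S a => [|x S IH] a.
  by move=> /eqP /= ->; exists [::], [::]; rewrite !cats0.
have [->|a0] := eqVneq a [::]; first by exists [::], (x :: S); rewrite cats0.
rewrite large_cons => /IH [S0 [S' [-> E]]].
by exists (x :: S0), S'; rewrite cat_cons large_cons fund_cat.
Qed.

Lemma large_pow0 X : large (omega_pow 0) X = (X != [::]).
Proof. by case: X => // x S; rewrite large_cons large0. Qed.

Lemma large_powS m x S : large (omega_pow m.+1) (x :: S) = large (nseq x m) S.
Proof. by []. Qed.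

Lemma large_pow_neq0 m S : large (omega_pow m) S -> S != [::].
Proof. by case: S. Qed.

Lemma large_nseq0 m S : large (nseq 0 m) S.
Proof. exact: large0. Qed.

Lemma large_nseq_size N Z : large (nseq N 0) Z = (N <= size Z).
Proof.
elim: Z N => [|z Z IH] [|N] //=; first exact: large0.
by rewrite ltnS -IH large_cons /fund (rev_nseq N.+1) /= rev_nseq.
Qed.

Lemma large_nseqS m c S : large (nseq c.+1 m) S ->
  exists S1 S2, [/\ S = S1 ++ S2, large (omega_pow m) S1 & large (nseq c m) S2].
Proof. by rewrite -addn1 nseqD; apply: large_cat_split. Qed.

Lemma large_nseq_leq m c c' S : c' <= c -> large (nseq c m) S -> large (nseq c' m) S.
Proof.
move=> le; rewrite -(subnK le) nseqD => /large_cat_split [S1 [S2 [-> L1 _]]].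
exact: large_catr.
Qed.

Lemma large_nseq_blocks m N Z : large (nseq N m) Z ->
  exists Ss R, [/\ size Ss = N, all (large (omega_pow m)) Ss & Z = flatten Ss ++ R].
Proof.
elim: N Z => [|N IH] Z; first by exists [::], Z.
case/large_nseqS => S1 [S2 [-> L1 /IH [Ss [R [<- LSs ->]]]]].
by exists (S1 :: Ss), R; rewrite /= L1 LSs catA.
Qed.

Definition upward_closed (a : cnf) : Prop := forall X Y,
  pairwise ltn X -> pairwise ltn Y -> {subset X <= Y} -> large a X -> large a Y.

Lemma large_nseqS_cat m c S1 S2 : upward_closed (nseq c m) ->
  pairwise ltn (S1 ++ S2) -> large (omega_pow m) S1 -> large (nseq c m) S2 ->
  large (nseq c.+1 m) (S1 ++ S2).
Proof.
move=> up pw L1 L2; rewrite -addn1 nseqD.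
have [S0 [S' [E ->]]] := large_cat_suffix (nseq c m) S2 L1.
apply: up L2 => //; first by move: pw; rewrite pairwise_cat => /and3P [].
  by move: pw; rewrite E -catA pairwise_cat => /and3P [].
by move=> z zS; rewrite mem_cat zS orbT.
Qed.

Lemma upward_closed_pow0 : upward_closed (omega_pow 0).
Proof.
move=> [|x X] Y _ _ sub //; rewrite !large_pow0.
by case: Y sub => // /(_ x (mem_head _ _)).
Qed.

Lemma upward_closed_powS m : (forall c, upward_closed (nseq c m)) ->
  upward_closed (omega_pow m.+1).
Proof.
move=> up [|x X] [|y Y] // pwX pwY sub; first by have := sub x (mem_head _ _).
rewrite !large_powS; move: pwX pwY; rewrite !pairwise_cons => /andP [xX pwX] /andP [yY pwY].
have yx : y <= x.
  by have := sub x (mem_head _ _); rewrite inE => /predU1P [<-|/(allP yY)/ltnW].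
move=> /(large_nseq_leq yx); apply: up => // z zX.
have xz : x < z := allP xX z zX.
have /predU1P [zy|//] : z \in y :: Y by apply: sub; rewrite inE zX orbT.
by move: yx; rewrite -zy leqNgt xz.
Qed.

Lemma upward_closed_nseq_of_pow m : upward_closed (omega_pow m) ->
  forall c, upward_closed (nseq c m).
Proof.
move=> pow; elim=> [|c IHc] X Y pwX pwY sub; first by rewrite !large_nseq0.
case/large_nseqS => [X1 [X2 [EX L1 L2]]]; subst X.
set b := last 0 X1.
have bX1 : b \in X1 := mem_last_nonempty 0 (large_pow_neq0 L1).
have [Y1 [Y2 [EY le_b gt_b]]] := pairwise_split_at b pwY; subst Y.
move: pwX; rewrite pairwise_cat => /and3P [/allrelP X12 pwX1 pwX2].
have := pwY; rewrite pairwise_cat => /and3P [_ pwY1 pwY2].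
rewrite (large_nseqS_cat IHc pwY) //.
  apply: (pow X1 _ pwX1 pwY1 _ L1) => z zX1.
  have := sub z; rewrite !mem_cat zX1 => /(_ isT) /orP [//|zY2].
  by have /= := allP gt_b z zY2; rewrite ltnNge (leq_last 0 pwX1 zX1).
apply: (IHc X2 _ pwX2 pwY2 _ L2) => z zX2.
have := sub z; rewrite !mem_cat zX2 orbT => /(_ isT) /orP [zY1|//].
by have /= := allP le_b z zY1; rewrite leqNgt (X12 b z bX1 zX2 : b < z).
Qed.

Lemma upward_closed_nseq m c : upward_closed (nseq c m).
Proof.
move: c; elim: m => [|m IHm]; apply: upward_closed_nseq_of_pow.
  exact: upward_closed_pow0.
exact: upward_closed_powS.
Qed.

Lemma large_nseq_subseq m c X Y : subseq X Y -> pairwise ltn Y ->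
  large (nseq c m) X -> large (nseq c m) Y.
Proof.
move=> XY pwY; apply: upward_closed_nseq => //; last exact: mem_subseq.
exact: subseq_pairwise pwY.
Qed.

Lemma large_nseq_cat m c S1 S2 : pairwise ltn (S1 ++ S2) ->
  large (omega_pow m) S1 -> large (nseq c m) S2 -> large (nseq c.+1 m) (S1 ++ S2).
Proof. exact/large_nseqS_cat/upward_closed_nseq. Qed.

Lemma large_pow_leq m m' X : m <= m' -> pairwise ltn X -> {in X, forall x, 0 < x} ->
  large (omega_pow m') X -> large (omega_pow m) X.
Proof.
move=> + pw pos; elim: m' => [|m' IH]; first by rewrite leqn0 => /eqP ->.
rewrite leq_eqVlt => /predU1P [-> //|/IH {}IH]; case: X pw pos IH => // x S pw pos IH.
rewrite large_powS => /(large_nseq_leq (pos x (mem_head _ _))) L; apply: IH.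
exact: (large_nseq_subseq (c := 1) (suffix_subseq [:: x] S) pw L).
Qed.

Lemma large_powS_two_blocks m x S : 2 <= x -> large (omega_pow m.+1) (x :: S) ->
  exists S1 S2 S3, [/\ S = S1 ++ S2 ++ S3, large (omega_pow m) S1 & large (omega_pow m) S2].
Proof.
rewrite large_powS => x2 /(large_nseq_leq x2) /large_nseqS [S1 [S' [-> L1]]].
by case/large_nseqS => S2 [S3 [-> L2 _]]; exists S1, S2, S3.
Qed.

(** * A pigeonhole principle for largeness *)

Definition sparse (Z : seq nat) : Prop :=
  forall x y, x \in Z -> y \in Z -> x < y -> 4 ^ x < y.

Lemma sparse_sub A B : {subset A <= B} -> sparse B -> sparse A.
Proof. by move=> sub sp x y xA yA; apply: sp; apply: sub. Qed.

Section Pigeonhole.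

Variables (c : nat) (col : nat -> nat).
Hypothesis c_gt0 : 0 < c.

Definition rich j d (S : seq nat) : bool :=
  if S is s :: R then large (nseq (s %/ (2 * c)) j) [seq y <- R | col y == d] else false.

(* Two rich blocks give one large block: an element [h] of the first block is
   below [s %/ (2 * c)] for the head [s] of the second block, by sparseness. *)
Lemma rich_pair j d S1 S2 : pairwise ltn (S1 ++ S2) -> sparse (S1 ++ S2) ->
  {in S1, forall z, 2 * c <= z} -> rich j d S1 -> rich j d S2 ->
  exists2 B, large (omega_pow j.+1) B & subseq B [seq z <- S1 ++ S2 | col z == d].
Proof.
case: S1 => [|s1 R1] //; case: S2 => [|s2 R2] // pw sp bd L1 L2; rewrite /= in L1 L2.
have k_gt0 : 0 < s1 %/ (2 * c) by rewrite divn_gt0 ?muln_gt0 // bd ?mem_head.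
have [h hW] : exists h, h \in [seq y <- R1 | col y == d].
  case: [seq y <- R1 | col y == d] (large_pow_neq0 (large_nseq_leq k_gt0 L1)) => // h W _.
  by exists h; rewrite mem_head.
move: (hW); rewrite mem_filter => /andP [hd hR1].
have h2c : 2 * c <= h by apply: bd; rewrite inE hR1 orbT.
have hs2 : 4 ^ h < s2.
  apply: sp; rewrite ?mem_cat ?inE ?hR1 ?eqxx ?orbT //.
  move: pw; rewrite pairwise_cat => /and3P [/allrelP lt12 _ _].
  by apply: lt12; rewrite ?inE ?hR1 ?eqxx ?orbT.
exists (h :: [seq y <- R2 | col y == d]).
  rewrite large_powS; apply: large_nseq_leq L2.
  rewrite leq_divRL ?muln_gt0 //; apply: ltnW; apply: leq_ltn_trans hs2.
  by apply: leq_trans (ltnW (sq_lt_exp4 h)); rewrite leq_mul2l h2c orbT.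
rewrite filter_cat -cat1s; apply: cat_subseq.
  by rewrite sub1seq mem_filter hd inE hR1 orbT.
by rewrite /=; case: (col s2 == d); rewrite ?subseq_cons.
Qed.

Lemma large_rich_blocks j d Ss : pairwise ltn (flatten Ss) -> sparse (flatten Ss) ->
  {in flatten Ss, forall z, 2 * c <= z} -> all (rich j d) Ss ->
  large (nseq (size Ss)./2 j.+1) [seq z <- flatten Ss | col z == d].
Proof.
move: {2}(size Ss) (leqnn (size Ss)) => N.
elim: N Ss => [|N IH] [|S1 [|S2 Ss]] //=; try by move=> *; apply: large0.
rewrite ltnS catA => /ltnW le pw sp bd /and3P [r1 r2 rs].
have := pw; rewrite pairwise_cat => /and3P [_ pw12 pwS].
have sub12 : {subset S1 ++ S2 <= (S1 ++ S2) ++ flatten Ss}.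
  by move=> z z12; rewrite mem_cat z12.
have subS : {subset flatten Ss <= (S1 ++ S2) ++ flatten Ss}.
  by move=> z zS; rewrite mem_cat zS orbT.
have bd1 : {in S1, forall z, 2 * c <= z} by move=> z z1; apply: bd; rewrite !mem_cat z1.
have [B LB sB] := rich_pair pw12 (sparse_sub sub12 sp) bd1 r1 r2.
have LS := IH Ss le pwS (sparse_sub subS sp) (fun z zS => bd z (subS z zS)) rs.
have sBS : subseq (B ++ [seq z <- flatten Ss | col z == d])
                  [seq z <- (S1 ++ S2) ++ flatten Ss | col z == d].
  by rewrite filter_cat; apply: cat_subseq.
have pwF : pairwise ltn [seq z <- (S1 ++ S2) ++ flatten Ss | col z == d].
  exact: pairwise_filter.
apply: (large_nseq_subseq (c := (size Ss)./2.+1) sBS pwF).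
exact: large_nseq_cat (subseq_pairwise sBS pwF) LB LS.
Qed.

Lemma large_pigeonhole j N Z : pairwise ltn Z -> sparse Z ->
  {in Z, forall z, 2 * c <= z} -> {in Z, forall z, col z < c} ->
  large (nseq N j) Z -> exists d, large (nseq (N %/ (2 * c)) j) [seq z <- Z | col z == d].
Proof.
elim: j N Z => [|j IH] N Z pw sp bd cb.
  rewrite large_nseq_size => NZ.
  have [|d le_Z] := pigeonhole_count (s := Z) (p := fun d z => col z == d) c_gt0.
    by move=> z zZ; exists (col z); rewrite ?cb.
  exists d; rewrite large_nseq_size size_filter.
  by apply: leq_trans (leq_div_double c_gt0 (leq_trans NZ le_Z)) _; rewrite -divn2 leq_div.
case/large_nseq_blocks => Ss [R [<- LSs EZ]].
have sSsZ : subseq (flatten Ss) Z by rewrite EZ prefix_subseq.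
have cover : forall S, S \in Ss -> exists2 d, d < c & rich j d S.
  move=> S SS; have sSZ := subseq_trans (mem_flatten_subseq SS) sSsZ.
  case: S SS sSZ (allP LSs S SS) => [|s Rs] //= SS sSZ; rewrite large_powS => Ls.
  have sZ := mem_subseq sSZ; have := subseq_pairwise sSZ pw; rewrite pairwise_cons.
  case/andP => /allP sRs pwRs; have sRZ z (zR : z \in Rs) : z \in Z by rewrite sZ ?inE ?zR ?orbT.
  have [d Ld] := IH s Rs pwRs (sparse_sub sRZ sp) (fun z zR => bd z (sRZ z zR))
    (fun z zR => cb z (sRZ z zR)) Ls.
  have k_gt0 : 0 < s %/ (2 * c) by rewrite divn_gt0 ?muln_gt0 // bd ?sZ ?mem_head.
  case E: [seq z <- Rs | col z == d] (large_pow_neq0 (large_nseq_leq k_gt0 Ld)) => [//|y W] _.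
  have : y \in [seq z <- Rs | col z == d] by rewrite E mem_head.
  rewrite mem_filter => /andP [/eqP yd yR]; exists d => //.
  by rewrite -yd cb ?sRZ.
have [d le_N] := pigeonhole_count c_gt0 cover.
set G := [seq S <- Ss | rich j d S].
have sGZ : subseq (flatten G) Z := subseq_trans (flatten_filter_subseq _ _) sSsZ.
have LG := large_rich_blocks (subseq_pairwise sGZ pw) (sparse_sub (mem_subseq sGZ) sp)
  (fun z zG => bd z (mem_subseq sGZ zG)) (filter_all _ _).
exists d; apply: (large_nseq_subseq _ (pairwise_filter _ pw) (large_nseq_leq _ LG)).
  by rewrite subseq_filter filter_all; apply: subseq_trans (filter_subseq _ _) sGZ.
by rewrite size_filter; apply: leq_div_double.
Qed.

End Pigeonhole.

Lemma large_pigeonhole_cons c col m x R : 0 < c -> pairwise ltn (x :: R) -> sparse R ->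
  {in R, forall z, col z < c} -> large (omega_pow m.+1) (x :: R) ->
  exists d, large (nseq (x %/ (2 * c)) m) [seq z <- R | col z == d].
Proof.
move=> c_gt0 pw sp cb; rewrite large_powS.
have [small _|big] := ltnP x (2 * c); first by exists 0; rewrite divn_small ?large_nseq0.
have /andP [/allP xR pwR] := pw; apply: large_pigeonhole => // z zR.
exact: leq_trans big (ltnW (xR z zR)).
Qed.

Lemma large_mono_tail c col m x R : 0 < c -> 2 * c <= x -> pairwise ltn (x :: R) ->
  sparse R -> {in R, forall z, col z < c} -> large (omega_pow m.+1) (x :: R) ->
  exists d, large (omega_pow m) [seq z <- R | col z == d].
Proof.
move=> c_gt0 big pw sp cb /(large_pigeonhole_cons c_gt0 pw sp cb) [d L]; exists d.
by apply: (large_nseq_leq (c' := 1) _ L); rewrite divn_gt0 ?muln_gt0.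
Qed.

Lemma size_below_bound (T : seq nat) u x : pairwise ltn T -> sparse T ->
  {in T, forall z, 2 <= z} -> u \in T -> x \in T -> x < u ->
  x * (2 * 2 ^ size [seq z <- T | z < u]) <= u.
Proof.
move=> pw sp ge2 uT xT xu; set Pre := [seq z <- T | z < u].
have xPre : x \in Pre by rewrite mem_filter xu xT.
set M := last 0 Pre.
have MPre : M \in Pre by apply: mem_last_nonempty; case: (Pre) xPre.
have [Mu MT] : M < u /\ M \in T by move: MPre; rewrite mem_filter => /andP [].
have pwPre : pairwise ltn Pre := pairwise_filter _ pw.
have xM : x <= M := leq_last 0 pwPre xPre.
have M2 : 2 <= M := ge2 M MT.
have sizePre : size Pre < M.
  have sub : {subset Pre <= iota 2 M.-1}.
    move=> z zPre; have zM : z <= M := leq_last 0 pwPre zPre.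
    move: zPre; rewrite mem_filter mem_iota => /andP [_ /ge2 ->] /=.
    by rewrite add2n prednK ?(ltnW M2).
  have := uniq_leq_size (pairwise_uniq ltnn pwPre) sub; rewrite size_iota.
  by move/leq_ltn_trans; apply; rewrite ltn_predL (ltnW M2).
apply: (@leq_trans (M * 2 ^ M)).
  by rewrite leq_mul // -expnS leq_pexp2l.
exact: leq_trans (mul_exp2_le_exp4 M) (ltnW (sp M u MT uT Mu)).
Qed.

(** * Groupings with an auxiliary colouring *)

Section Grouping.

Variables (P : nat -> nat -> bool) (n : nat).

Definition homogeneous (F G : seq nat) : bool :=
  allrel (fun x x' => allrel (fun y y' => P x y == P x' y') G G) F F.

Lemma homogeneousP F G : reflect
  (forall x x' y y', x \in F -> x' \in F -> y \in G -> y' \in G -> P x y = P x' y')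
  (homogeneous F G).
Proof.
apply: (iffP allrelP) => [hom x x' y y' xF x'F yG y'G|hom x x' xF x'F].
  by have /allrelP /(_ y y' yG y'G) /eqP := hom x x' xF x'F.
by apply/allrelP => y y' yG y'G; apply/eqP/hom.
Qed.

Lemma homogeneous_rep F G r : {in F, forall x, {in G, forall y, P x y = P x r}} ->
  {in F &, forall x x', P x r = P x' r} -> homogeneous F G.
Proof.
move=> rep constF; apply/homogeneousP => x x' y y' xF x'F yG y'G.
by rewrite (rep x xF y yG) (rep x' x'F y' y'G) (constF x x' xF x'F).
Qed.

Definition chi_grouping (chi : nat -> nat) (T : seq nat) (Fs : seq (seq nat)) : Prop :=
  [/\ forall F, F \in Fs -> [/\ pairwise ltn F, {subset F <= T}, large (omega_pow n) F
                              & {in F &, forall x x', chi x = chi x'}],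
      pairwise (fun F G => allrel ltn F G) Fs & pairwise homogeneous Fs].

Definition maxes (Fs : seq (seq nat)) : seq nat := [seq last 0 F | F <- Fs].

Lemma chi_grouping_cat chi T Fs1 Fs2 : chi_grouping chi T Fs1 -> chi_grouping chi T Fs2 ->
  {in Fs1 & Fs2, forall F G, allrel ltn F G && homogeneous F G} ->
  chi_grouping chi T (Fs1 ++ Fs2).
Proof.
move=> [g1 o1 h1] [g2 o2 h2] cross; split.
- by move=> F; rewrite mem_cat => /orP [/g1|/g2].
- by rewrite pairwise_cat o1 o2 !andbT; apply/allrelP => F G F1 G2; case/andP: (cross F G F1 G2).
- by rewrite pairwise_cat h1 h2 !andbT; apply/allrelP => F G F1 G2; case/andP: (cross F G F1 G2).
Qed.

Lemma chi_grouping_maxes chi T Fs : chi_grouping chi T Fs -> pairwise ltn (maxes Fs).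
Proof.
move=> [groups ord _]; rewrite pairwise_map.
have lastF F : F \in Fs -> last 0 F \in F.
  by move=> /groups [_ _ /large_pow_neq0 ne _]; exact: mem_last_nonempty.
apply: (sub_in_pairwise (P := mem Fs)) ord; last exact/allP.
by move=> F G FFs GFs /allrelP; apply; apply: lastF.
Qed.

Lemma end_homogeneous_tail T u R m : pairwise ltn T -> sparse T ->
  {in T, forall z, 2 <= z} -> pairwise ltn (u :: R) -> {subset u :: R <= T} ->
  large (omega_pow m.+1) (u :: R) ->
  exists V, [/\ subseq V R, {in T, forall x, x < u -> large (nseq x m) V}
              & {in T, forall x, x < u -> {in V &, forall y y', P x y = P x y'}}].
Proof.
move=> pwT spT ge2 pw sub L; set Pre := [seq z <- T | z < u].
(* colour y by the pattern of the values P x y, x \in Pre *)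
have sR : {subset R <= T} by move=> z zR; apply: sub; rewrite inE zR orbT.
have [d LV] := large_pigeonhole_cons (c := 2 ^ size Pre) (col := fun y => bits (P^~ y) Pre)
  (expn_gt0 _ _) pw (sparse_sub sR spT) (fun y _ => bits_lt _ _) L.
exists [seq y <- R | bits (P^~ y) Pre == d]; split.
- exact: filter_subseq.
- move=> x xT xu; apply: large_nseq_leq LV; rewrite leq_divRL ?muln_gt0 ?expn_gt0 //.
  exact: size_below_bound (sub u (mem_head _ _)) xT xu.
- move=> x xT xu y y'; rewrite !mem_filter => /andP [/eqP dy _] /andP [/eqP dy' _].
  have xPre : x \in Pre by rewrite mem_filter xu xT.
  by apply: (@bits_inj (P^~ y) (P^~ y') Pre _ x xPre); rewrite dy dy'.
Qed.

Definition grouping_property k : Prop :=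
  forall T chi C, 0 < C -> pairwise ltn T -> sparse T -> {in T, forall x, 2 * C <= x} ->
  {in T, forall x, chi x < C} -> large (omega_pow (n + 3 * k).+1) T ->
  exists2 Fs, chi_grouping chi T Fs & large (omega_pow k) (maxes Fs).

Lemma grouping_property0 : grouping_property 0.
Proof.
move=> [|t R] chi C C_gt0 pw sp bd cb //; rewrite muln0 addn0 => LT.
have sR : {subset R <= t :: R} by move=> z zR; rewrite inE zR orbT.
have [d L] := large_mono_tail (col := chi) C_gt0 (bd t (mem_head _ _)) pw (sparse_sub sR sp)
  (fun z zR => cb z (sR z zR)) LT.
exists [:: [seq z <- R | chi z == d]]; last by rewrite large_pow0.
split => // F; rewrite inE => /eqP ->; split => //.
- by apply: pairwise_filter; case/andP: pw.
- by move=> z; rewrite mem_filter => /andP [_ /sR].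
- by move=> x y; rewrite !mem_filter => /andP [/eqP -> _] /andP [/eqP -> _].
Qed.

Section Step.

Variables (k : nat) (T : seq nat) (chi : nat -> nat) (C : nat).
Hypothesis IH : grouping_property k.
Hypotheses (C_gt0 : 0 < C) (pwT : pairwise ltn T) (spT : sparse T).
Hypotheses (bdT : {in T, forall x, 2 * C <= x}) (chiT : {in T, forall x, chi x < C}).

Lemma T_ge2 : {in T, forall x, 2 <= x}.
Proof. by move=> x /bdT; apply: leq_trans; rewrite leq_pmulr. Qed.

Lemma groups_in_block reps u R t0 : t0 \in T -> t0 < u -> pairwise ltn (u :: R) ->
  {subset u :: R <= T} -> {in R, forall z, 2 * (C * 2 ^ size reps) <= z} ->
  large (omega_pow (n + 3 * k).+2) (u :: R) ->
  exists Fs r, [/\ chi_grouping chi T Fs, large (omega_pow k) (maxes Fs),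
    forall F, F \in Fs -> {subset F <= R} /\
      {in F &, forall x x', {in reps, forall r', P x r' = P x' r'}}
    & forall G, G \in Fs -> {in T, forall x, x < u -> {in G, forall y, P x y = P x r}}].
Proof.
move=> t0T t0u pw sub bdR L.
have [V [sVR LV homV]] := end_homogeneous_tail pwT spT T_ge2 pw sub L.
have sVT : {subset V <= T}.
  by move=> z /(mem_subseq sVR) zR; apply: sub; rewrite inE zR orbT.
have LV1 : large (omega_pow (n + 3 * k).+1) V.
  by apply: (large_nseq_leq (c' := 1) _ (LV t0 t0T t0u)); rewrite (leq_trans _ (T_ge2 t0T)).
set chiV := fun x => chi x + C * bits (P x) reps.
have chiV_inj x x' : x \in T -> x' \in T -> chiV x = chiV x' ->
    chi x = chi x' /\ bits (P x) reps = bits (P x') reps.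
  by move=> xT x'T; apply: mixed_radix_inj; apply: chiT.
have CV_gt0 : 0 < C * 2 ^ size reps by rewrite muln_gt0 C_gt0 expn_gt0.
have pwV : pairwise ltn V by apply: subseq_pairwise sVR _; case/andP: pw.
have [Fs [gV oV hV] LFs] := @IH V chiV _ CV_gt0 pwV (sparse_sub sVT spT)
  (fun z zV => bdR z (mem_subseq sVR zV))
  (fun x xV => mixed_radix_lt (chiT (sVT x xV)) (bits_lt _ _)) LV1.
have rV : head 0 V \in V by apply: mem_head_nonempty (large_pow_neq0 LV1).
exists Fs, (head 0 V); split => //.
- split => // F /gV [pwF sFV LF cF]; split => // [z /sFV /sVT //|x x' xF x'F].
  by have [] := chiV_inj x x' (sVT x (sFV x xF)) (sVT x' (sFV x' x'F)) (cF x x' xF x'F).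
- move=> F /gV [_ sFV _ cF]; split=> [z /sFV /(mem_subseq sVR) //|x x' xF x'F r' r'reps].
  have [_ E] := chiV_inj x x' (sVT x (sFV x xF)) (sVT x' (sFV x' x'F)) (cF x x' xF x'F).
  exact: bits_inj E r' r'reps.
- move=> G /gV [_ sGV _ _] x xT xu y yG.
  exact: homV x xT xu y (head 0 V) (sGV y yG) rV.
Qed.

Definition represented (reps B : seq nat) (Fs : seq (seq nat)) : Prop :=
  forall G, G \in Fs -> {subset G <= B} /\
    exists2 r, r \in reps & {in T, forall x, all (ltn x) B -> {in G, forall y, P x y = P x r}}.

Definition groups_for (Us Fs : seq (seq nat)) (reps : seq nat) : Prop :=
  [/\ chi_grouping chi T Fs, large (nseq (size Us) k) (maxes Fs), size reps = size Us
    & represented reps (flatten Us) Fs].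

(* The groups inside a new leftmost block [u :: R] are found with a colouring that
   records [P x r] for the representatives [r] of the groups to its right. *)
Lemma groups_for_cons Us Fs reps u R t0 : t0 \in T -> t0 < u ->
  pairwise ltn ((u :: R) ++ flatten Us) -> {subset u :: R <= T} ->
  {in R, forall z, 2 * (C * 2 ^ size Us) <= z} ->
  large (omega_pow (n + 3 * k).+2) (u :: R) -> groups_for Us Fs reps ->
  exists Fs' reps', groups_for ((u :: R) :: Us) Fs' reps'.
Proof.
move=> t0T t0u pw sub bdR L [g LFs sz rep].
have := pw; rewrite pairwise_cat => /and3P [/allrelP ltUUs pwU _].
rewrite -sz in bdR; have [FsU [r [gU LU subU homU]]] := groups_in_block t0T t0u pwU sub bdR L.
have cross : {in FsU & Fs, forall F G, allrel ltn F G && homogeneous F G}.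
  move=> F G FU GFs; have [sFR constF] := subU F FU; have [sGB [r' r'reps repG]] := rep G GFs.
  have ltFG x y : x \in F -> y \in flatten Us -> x < y.
    by move=> xF; apply: ltUUs; rewrite inE sFR ?orbT.
  apply/andP; split; first by apply/allrelP => x y xF /sGB; apply: ltFG.
  apply: (homogeneous_rep (r := r')) => [x xF y yG|x x' xF x'F]; last exact: constF.
  by apply: repG yG; [apply: sub; rewrite inE sFR ?orbT | apply/allP => z; apply: ltFG].
have gAll := chi_grouping_cat gU g cross.
exists (FsU ++ Fs), (r :: reps); split => //=.
- by rewrite /maxes map_cat large_nseq_cat // -map_cat; apply: chi_grouping_maxes gAll.
- by rewrite sz.
move=> G; rewrite mem_cat => /orP [GU|GFs].
  have [sGR _] := subU G GU; split=> [z zG|]; first by rewrite inE mem_cat sGR ?orbT.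
  exists r; first exact: mem_head.
  by move=> x xT /andP [xu _]; apply: homU.
have [sGB [r' r'reps repG]] := rep G GFs.
split=> [z /sGB zB|]; first by rewrite inE mem_cat zB !orbT.
exists r'; first by rewrite inE r'reps orbT.
by move=> x xT; rewrite /= all_cat => /and3P [_ _]; apply: repG.
Qed.

Lemma groups_for_blocks Us t0 : t0 \in T -> pairwise ltn (flatten Us) ->
  {subset flatten Us <= T} -> all (ltn t0) (flatten Us) ->
  {in flatten Us, forall z, 2 * (C * 2 ^ size Us) <= z} ->
  all (large (omega_pow (n + 3 * k).+2)) Us -> exists Fs reps, groups_for Us Fs reps.
Proof.
move=> t0T; elim: Us => [|U Us IHU] pw sub t0Us bd /=.
  by exists [::], [::]; split.
case: U pw sub t0Us bd => [|u R] // pw sub t0Us bd /andP [L LUs].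
have := pw; rewrite pairwise_cat => /and3P [_ _ pwUs].
move: t0Us; rewrite all_cat => /andP [/andP [t0u _] t0Us].
have bd_mono : 2 * (C * 2 ^ size Us) <= 2 * (C * 2 ^ (size Us).+1).
  by rewrite !leq_mul2l expnS leq_pmull ?orbT.
have [Fs [reps inv]] : exists Fs reps, groups_for Us Fs reps.
  apply: IHU => // [z zUs|z zUs].
    by apply: sub; rewrite inE mem_cat zUs !orbT.
  by apply: leq_trans bd_mono (bd z _); rewrite inE mem_cat zUs !orbT.
apply: groups_for_cons t0T t0u pw _ _ L inv.
  by move=> z; rewrite inE => /predU1P [->|zR]; apply: sub; rewrite inE ?eqxx ?mem_cat ?zR ?orbT.
by move=> z zR; apply: leq_trans bd_mono (bd z _); rewrite inE mem_cat zR !orbT.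
Qed.

Lemma groups_in_large Z t m : t \in T -> pairwise ltn Z -> {subset Z <= T} ->
  all (ltn t) Z -> 2 * C <= m -> {in Z, forall z, 4 ^ m < z} ->
  large (nseq m (n + 3 * k).+2) Z ->
  exists2 Fs, chi_grouping chi T Fs
            & large (nseq m k) (maxes Fs) /\ forall G, G \in Fs -> {subset G <= Z}.
Proof.
move=> tT pwZ sZ tZ Cm bdZ /large_nseq_blocks [Us [R [szUs LUs EZ]]].
have sUsZ : subseq (flatten Us) Z by rewrite EZ prefix_subseq.
have [|||z zUs||Fs [reps [g L _ rep]]] := @groups_for_blocks Us t tT.
- exact: subseq_pairwise sUsZ pwZ.
- by move=> z /(mem_subseq sUsZ) /sZ.
- by apply/allP => z /(mem_subseq sUsZ); apply/allP.
- apply/ltnW/(leq_ltn_trans _ (bdZ z (mem_subseq sUsZ zUs))).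
  by apply: leq_trans (mul_exp2_le_exp4 m); rewrite szUs mulnA leq_mul2r Cm orbT.
- exact: LUs.
exists Fs => //; split; first by rewrite -szUs.
by move=> G /rep [sGUs _] y /sGUs /(mem_subseq sUsZ).
Qed.

Lemma head_group y0 t s R : t \in T -> t < s -> pairwise ltn (s :: R) -> {subset s :: R <= T} ->
  large (omega_pow (n + 3 * k).+3) (s :: R) ->
  exists F, [/\ chi_grouping chi T [:: F], {subset F <= R}
               & {in F &, forall x x', P x y0 = P x' y0}].
Proof.
move=> tT ts pw sub L; set col := fun x => chi x + C * P x y0.
have sR : {subset R <= T} by move=> z zR; apply: sub; rewrite inE zR orbT.
have bds : 4 * C <= s.
  apply/ltnW/(leq_ltn_trans _ (spT tT (sub s (mem_head _ _)) ts))/(leq_trans _ (two_le_exp4 t)).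
  by rewrite -[4]/(2 * 2) -mulnA leq_mul2l bdT.
have colR : {in R, forall x, col x < C * 2}.
  by move=> x xR; apply: mixed_radix_lt; [apply/chiT/sR | case: (P x y0)].
have C2_gt0 : 0 < C * 2 by rewrite muln_gt0 C_gt0.
have [|d LF] := large_mono_tail C2_gt0 _ pw (sparse_sub sR spT) colR L.
  by rewrite (mulnC C) mulnA.
have sFR : {subset [seq x <- R | col x == d] <= R} by move=> x; rewrite mem_filter => /andP [].
have col_eq x x' : x \in [seq x <- R | col x == d] -> x' \in [seq x <- R | col x == d] ->
    chi x = chi x' /\ P x y0 = P x' y0 :> nat.
  rewrite !mem_filter => /andP [/eqP cx xR] /andP [/eqP cx' x'R].
  by apply: mixed_radix_inj (etrans cx (esym cx')); apply/chiT/sR.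
exists [seq x <- R | col x == d]; split => // [|x x' xF x'F]; last first.
  by have [_] := col_eq x x' xF x'F; case: (P x y0); case: (P x' y0).
have pwF : pairwise ltn [seq x <- R | col x == d] by apply: pairwise_filter; case/andP: pw.
split => //= F; rewrite inE => /eqP ->; split => // [z /sFR /sR //||x x' xF x'F].
  apply: large_pow_leq LF => //; first by rewrite -!addnS leq_addr.
  by move=> x /sFR /sR /T_ge2; apply: leq_trans.
by have [] := col_eq x x' xF x'F.
Qed.

Lemma grouping_step : large (omega_pow (n + 3 * k).+4) T ->
  exists2 Fs, chi_grouping chi T Fs & large (omega_pow k.+1) (maxes Fs).
Proof.
move=> LT; have [t [rest ET]] : exists t rest, T = t :: rest.
  by case: (T) LT => [//|t rest]; exists t, rest.
have tT : t \in T by rewrite ET mem_head.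
rewrite ET in LT; have [S1 [S2 [rest2 [Erest]]]] := large_powS_two_blocks (T_ge2 tT) LT.
case: S1 Erest => [//|s1 R1]; case: S2 => [//|s2 R2] Erest L1 L2.
have : pairwise ltn (t :: (s1 :: R1) ++ (s2 :: R2) ++ rest2) by rewrite -Erest -ET.
rewrite pairwise_cons pairwise_cat => /andP [/allP lt_t /and3P [/allrelP lt12 pw1]].
rewrite pairwise_cat => /and3P [_ pw2 _].
have [sub1 sub2] : {subset s1 :: R1 <= T} /\ {subset s2 :: R2 <= T}.
  by split=> z zS; rewrite ET Erest inE !mem_cat zS ?orbT.
have [s1T s2T] : s1 \in T /\ s2 \in T by rewrite sub1 ?sub2 ?mem_head.
have lt_R1_R2 x y : x \in R1 -> y \in s2 :: R2 -> x < y.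
  by move=> xR1 yS2; apply: lt12; rewrite ?mem_cat ?yS2 // inE xR1 orbT.
have [ts1 ts2] : t < s1 /\ t < s2 by split; apply: lt_t; rewrite !mem_cat !inE eqxx ?orbT.
have [Z [ssZR2 LZ homZ]] := end_homogeneous_tail pwT spT T_ge2 pw2 sub2 L2.
have y0Z : head 0 Z \in Z.
  exact/mem_head_nonempty/large_pow_neq0/(large_nseq_leq (c' := 1) (ltnW (T_ge2 tT)))/LZ.
have [F0 [g0 sF0R1 constF0]] := head_group (head 0 Z) tT ts1 pw1 sub1 L1.
have [g0F _ _] := g0; have [_ _ LF0 _] := g0F F0 (mem_head _ _).
set m0 := last 0 F0; have m0R1 : m0 \in R1 := sF0R1 _ (mem_last_nonempty 0 (large_pow_neq0 LF0)).
have m0T : m0 \in T by rewrite sub1 ?inE ?m0R1 ?orbT.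
have m0s2 : m0 < s2 by rewrite lt_R1_R2 ?mem_head.
have sZR2 : {subset Z <= R2} := mem_subseq ssZR2.
have s1m0 : s1 < m0 by move: pw1 => /andP [/allP + _]; apply.
have [|z /sZR2 zR2|||z /sZR2 zR2||FsG gG [LG sGZ]] := @groups_in_large Z t m0 tT.
- by apply: subseq_pairwise ssZR2 _; case/andP: pw2.
- by apply: sub2; rewrite inE zR2 orbT.
- by apply/allP => z /sZR2 zR2; apply: lt_t; rewrite !mem_cat !inE zR2 !orbT.
- by rewrite (leq_trans (bdT tT)) // ltnW // (ltn_trans ts1).
- by apply: ltn_trans (spT m0T s2T m0s2) _; move: pw2 => /andP [/allP + _]; apply.
- exact: LZ.
exists (F0 :: FsG); last by rewrite (_ : maxes _ = m0 :: maxes FsG) // large_powS.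
rewrite -cat1s; apply: chi_grouping_cat g0 gG _ => F G; rewrite inE => /eqP -> GG.
apply/andP; split.
  apply/allrelP => x y /sF0R1 xR1 /(sGZ G GG) /sZR2 yR2.
  by apply: lt_R1_R2 xR1 _; rewrite inE yR2 orbT.
apply: (homogeneous_rep (r := head 0 Z)) => // x xF0 y yG; have xR1 := sF0R1 x xF0.
by apply: homZ (sGZ G GG y yG) y0Z; rewrite ?sub1 ?inE ?xR1 ?orbT ?lt_R1_R2 ?mem_head.
Qed.

End Step.

Lemma grouping_propertyS k : grouping_property k -> grouping_property k.+1.
Proof.
move=> IH T chi C C_gt0 pwT spT bdT chiT.
rewrite (_ : n + 3 * k.+1 = (n + 3 * k).+3); last lia.
exact: (grouping_step IH C_gt0 pwT spT bdT chiT).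
Qed.

Lemma grouping_property_all k : grouping_property k.
Proof. by elim: k => [|k]; [exact: grouping_property0 | exact: grouping_propertyS]. Qed.

End Grouping.

Lemma grouping_of_chi_grouping P n k chi X Fs : chi_grouping P n chi X Fs ->
  large (omega_pow k) (maxes Fs) -> grouping (omega_pow n) (omega_pow k) X P Fs.
Proof.
move=> [groups /(pairwiseP [::]) ord /(pairwiseP [::]) hom] LK.
have nthF i : i < size Fs -> nth [::] Fs i \in Fs by apply: mem_nth.
split; [|split; [|split; [|split]]] => //.
- move=> i /nthF /groups [pwF sFX _ _]; split => //.
  by rewrite sorted_pairwise //; apply: ltn_trans.
- move=> i j /andP [ij jF]; have iF := ltn_trans ij jF.
  have [_ _ /large_pow_neq0 Fi _] := groups _ (nthF i iF).
  have [_ _ /large_pow_neq0 Fj _] := groups _ (nthF j jF).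
  by apply: (allrelP (ord i j iF jF ij)); [apply: mem_last_nonempty | apply: mem_head_nonempty].
- by move=> i /nthF /groups [].
move=> i j /andP [ij jF] x x' y y' xi x'i yj y'j.
exact: homogeneousP (hom i j (ltn_trans ij jF) jF ij) x x' y y' xi x'i yj y'j.
Qed.

Theorem theorem2p4 (n k : nat) (X : seq nat) :
  sorted ltn X ->
  large (omega_pow (n + 6 * k)) X ->
  exp_sparse X ->
  forall P : nat -> nat -> bool,
    exists Fs : seq (seq nat), grouping (omega_pow n) (omega_pow k) X P Fs.
Proof.
rewrite sorted_pairwise; last exact: ltn_trans.
move=> pwX LX [X3 spX] P.
have X2 : {in X, forall x, 2 * 1 <= x} by move=> x /X3; apply: ltnW.
have [Fs gX LFs] : exists2 Fs, chi_grouping P n (fun=> 0) X Fs & large (omega_pow k) (maxes Fs).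
  case: k LX => [|k] LX.
    exists [:: X]; last by rewrite large_pow0.
    by split => // F; rewrite inE => /eqP ->; split; rewrite // -(addn0 n) -(muln0 6).
  apply: (@grouping_property_all P n k.+1 X (fun=> 0) 1 isT pwX spX X2) => //.
  apply: large_pow_leq LX => //; first lia.
  by move=> x /X3; apply: leq_trans.
by exists Fs; apply: grouping_of_chi_grouping gX LFs.
Qed.
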